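(* Let $p$ be an odd prime and $\beta\in p\mathbb{Z}_p$, $\beta\neq 0$. Let $\mathbb{E}_\beta$ be an elliptic curve defined over $\mathbb{Q}_p$ (embedded in $\mathbb{P}^2$ by a Weierstrass embedding) together with a surjective $p$-adic analytic group homomorphism $\xi_\beta:\mathbb{Q}_p^\times\to\mathbb{E}_\beta(\mathbb{Q}_p)$ with kernel $\beta^{\mathbb{Z}}$ (these exist by Tate's theorem). Let $\chi_\beta:\mathbb{Z}_p\to\mathbb{E}_\beta(\mathbb{Q}_p)$ be $\chi_\beta(a)=\xi_\beta(\operatorname{Exp}(pa))$, let $\mathcal{Y}_\beta$ be the structure induced on $\mathbb{Z}_p$ by $(\mathbb{Q}_p,+,\times)$ and $\chi_\beta$, and let $\mathcal{E}_\beta$ be the structure induced on $\mathbb{Z}$ by $(\mathbb{Q}_p,+,\times)$ and $\chi_\beta|_{\mathbb{Z}}$. Then $\mathcal{Y}_\beta$ expands $(\mathbb{Z}_p,+,\operatorname{Val}_p)$ and $\mathcal{E}_\beta$ expands $(\mathbb{Z},+,\operatorname{Val}_p)$.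
   Context: $\operatorname{Exp}(a)=\sum_{n\ge0}a^n/n!$ is the $p$-adic exponential on $p\mathbb{Z}_p$. ''Definable'' means definable with parameters; subsets of $\mathbb{P}^2(\mathbb{Q}_p)^n$ are $(\mathbb{Q}_p,+,\times)$-definable in the usual way via standard affine charts. The structure induced on a set $A$ by $\mathcal{M}$ and a map $f$ has a relation for each $\{(a_1,\ldots,a_n)\in A^n:(f(a_1),\ldots,f(a_n))\in Y\}$ with $Y$ $\mathcal{M}$-definable. A structure on $\mathbb{Z}_p$ (resp. $\mathbb{Z}$) expands $(\mathbb{Z}_p,+,\operatorname{Val}_p)$ (resp. $(\mathbb{Z},+,\operatorname{Val}_p)$) if it defines the graph of $+$ and the relation $\{(a,b):\operatorname{Val}_p(a)\le\operatorname{Val}_p(b)\}$, where $\operatorname{Val}_p$ is the $p$-adic valuation. *)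

From HB Require Import structures.
From mathcomp Require Import all_boot all_order all_algebra.
Set Implicit Arguments. Unset Strict Implicit. Unset Printing Implicit Defensive.
Import Order.TTheory GRing.Theory Num.Theory.
Local Open Scope ring_scope.

Section Padic.
Variables (K : fieldType) (v : K -> int).

(* x lies in p^N Z_p  (0 has valuation +oo) *)
Definition ball (N : int) (x : K) : Prop := x = 0 \/ (N <= v x).

Definition is_lim (u : nat -> K) (l : K) : Prop :=
  forall N : int, exists m : nat, forall n : nat, (m <= n)%N -> ball N (u n - l).

Definition cauchy (u : nat -> K) : Prop :=
  forall N : int, exists m : nat, forall n k : nat, (m <= n)%N -> (m <= k)%N ->
    ball N (u n - u k).

(* (K, v) is (isomorphic as a valued field to) Q_p with v = Val_p on K^x:
   v is a discrete valuation, v(p) = 1, K is complete and Q is dense. *)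
Definition padic_field (p : nat) : Prop :=
  [/\ forall x y : K, x != 0 -> y != 0 -> v (x * y) = v x + v y,
      forall x y : K, x != 0 -> y != 0 -> x + y != 0 ->
        v x <= v (x + y) \/ v y <= v (x + y),
      (p%:R : K) != 0 /\ v p%:R = 1,
      forall u, cauchy u -> exists l, is_lim u l
    & forall (x : K) (N : int), exists q : rat, ball N (x - ratr q)].

Definition isZp (x : K) : Prop := ball 0 x.

Definition val_le (a b : K) : Prop := b = 0 \/ (a != 0 /\ v a <= v b).

Definition Exp_is (a e : K) : Prop :=
  is_lim (fun N => \sum_(n < N) a ^+ n / (n`!)%:R) e.

End Padic.

Section Curves.
Variable K : fieldType.

Notation pt := (K * K * K)%type.

(* the canonical representative of a point of P^2(K):
   (x:y:1), (x:1:0) or (1:0:0) *)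
Definition normalized (t : pt) : bool :=
  let: (x, y, z) := t in
  [|| z == 1, (z == 0) && (y == 1) | [&& z == 0, y == 0 & x == 1]].

Definition coord (t : pt) (i : 'I_3) : K :=
  let: (x, y, z) := t in
  if val i == 0%N then x else if val i == 1%N then y else z.

Record weier := Weier { wa1 : K; wa2 : K; wa3 : K; wa4 : K; wa6 : K }.

Definition disc (W : weier) : K :=
  let: Weier a1 a2 a3 a4 a6 := W in
  let b2 := a1 ^+ 2 + 4 * a2 in
  let b4 := 2 * a4 + a1 * a3 in
  let b6 := a3 ^+ 2 + 4 * a6 in
  let b8 := a1 ^+ 2 * a6 + 4 * a2 * a6 - a1 * a3 * a4 + a2 * a3 ^+ 2 - a4 ^+ 2 in
  - b2 ^+ 2 * b8 - 8 * b4 ^+ 3 - 27 * b6 ^+ 2 + 9 * b2 * b4 * b6.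

Definition on_curve (W : weier) (t : pt) : bool :=
  let: Weier a1 a2 a3 a4 a6 := W in
  let: (x, y, z) := t in
  y ^+ 2 * z + a1 * x * y * z + a3 * y * z ^+ 2
    == x ^+ 3 + a2 * x ^+ 2 * z + a4 * x * z ^+ 2 + a6 * z ^+ 3.

(* E(K), each point given by its normalized representative *)
Definition Epoint (W : weier) (t : pt) : bool := normalized t && on_curve W t.

Definition Ozero : pt := (0, 1, 0).

(* chord-tangent addition (Silverman, AEC, III.2.3) on normalized points of E *)
Definition eadd (W : weier) (P Q : pt) : pt :=
  let: Weier a1 a2 a3 a4 a6 := W in
  let: (x1, y1, z1) := P in
  let: (x2, y2, z2) := Q in
  if z1 == 0 then Q else if z2 == 0 then P else
  if (x1 == x2) && (y1 + y2 + a1 * x2 + a3 == 0) then Ozero else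
  let lam := if x1 != x2 then (y2 - y1) / (x2 - x1)
             else (3 * x1 ^+ 2 + 2 * a2 * x1 + a4 - a1 * y1) / (2 * y1 + a1 * x1 + a3) in
  let nu := if x1 != x2 then (y1 * x2 - y2 * x1) / (x2 - x1)
            else (- x1 ^+ 3 + a4 * x1 + 2 * a6 - a3 * y1) / (2 * y1 + a1 * x1 + a3) in
  let x3 := lam ^+ 2 + a1 * lam - a2 - x1 - x2 in
  (x3, - (lam + a1) * x3 - nu - a3, 1).

End Curves.

(* near every x0 != 0, in some standard affine chart {t_i != 0}, the two affine
   coordinates t_j / t_i of xi x are convergent power series in (x - x0). *)
Definition analytic_map (K : fieldType) (v : K -> int) (xi : K -> (K * K * K)%type) : Prop :=
  forall x0 : K, x0 != 0 -> exists (N : int) (i : 'I_3) (c : 'I_3 -> nat -> K),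
    forall x : K, x != 0 -> ball v N (x - x0) ->
      coord (xi x) i != 0 /\
      forall j : 'I_3, j != i ->
        is_lim v (fun M => \sum_(n < M) c j n * (x - x0) ^+ n)
                 (coord (xi x) j / coord (xi x) i).

(* subsets of K^m definable in (K,+,x) with parameters *)
Definition K_definable (K : fieldType) (m : nat) (X : seq K -> Prop) : Prop :=
  exists f : GRing.formula K,
    forall s : seq K, size s = m -> (X s <-> GRing.holds s f).

Definition flat3 (K : fieldType) (s : seq (K * K * K)) : seq K :=
  flatten [seq [:: t.1.1; t.1.2; t.2] | t <- s].

(* subsets of P^2(K)^n (given on normalized representatives) definable in
   (K,+,x): the set of coordinate vectors of the normalized representatives
   is definable in K^(3n). *)
Definition P2_definable (K : fieldType) (n : nat) (Y : seq (K * K * K) -> Prop) : Prop :=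
  K_definable (3 * n) (fun s => exists ts : seq (K * K * K),
    [/\ size ts = n, all (@normalized K) ts, s = flat3 ts & Y ts]).

(* first-order formulas over a relational language whose symbols are
   (names of) relations on T; variables are natural numbers *)
Inductive fo (T : Type) : Type :=
| FoRel of (seq T -> Prop) & seq nat
| FoEq of nat & nat
| FoNot of fo T
| FoAnd of fo T & fo T
| FoEx of nat & fo T.

Fixpoint fo_sat (T : Type) (e : nat -> T) (f : fo T) : Prop :=
  match f with
  | FoRel R vs => R (map e vs)
  | FoEq i j => e i = e j
  | FoNot g => ~ fo_sat e g
  | FoAnd g h => fo_sat e g /\ fo_sat e h
  | FoEx i g => exists x : T, fo_sat (fun j => if j == i then x else e j) g
  end.

Fixpoint fo_in (T : Type) (L : (seq T -> Prop) -> Prop) (f : fo T) : Prop :=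
  match f with
  | FoRel R _ => L R
  | FoEq _ _ => True
  | FoNot g => fo_in L g
  | FoAnd g h => fo_in L g /\ fo_in L h
  | FoEx _ g => fo_in L g
  end.

(* X ⊆ T^m is definable (with parameters) in the structure (T, L):
   variables 0..m-1 are the free variables, others are parameters e0 *)
Definition fo_definable (T : Type) (L : (seq T -> Prop) -> Prop) (m : nat)
    (X : seq T -> Prop) : Prop :=
  exists f : fo T, fo_in L f /\ exists e0 : nat -> T,
    forall s : seq T, size s = m -> (X s <-> fo_sat (fun i => nth (e0 i) s i) f).

(* language of the structure induced on A by (K,+,x) and g : A -> P^2(K) *)
Definition induced_lang (K : fieldType) (A : Type) (g : A -> (K * K * K)%type)
    : (seq A -> Prop) -> Prop :=
  fun R => exists (n : nat) (Y : seq (K * K * K) -> Prop),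
    P2_definable n Y /\ forall s : seq A, R s <-> (size s = n /\ Y (map g s)).

(* the structure (A, L) expands (A, +, Val): it defines the graph addg of + and
   the relation Val(a) <= Val(b) *)
Definition expands_add_val (A : Type) (L : (seq A -> Prop) -> Prop)
    (addg : A -> A -> A -> Prop) (vle : A -> A -> Prop) : Prop :=
  fo_definable L 3 (fun s => match s with [:: a; b; c] => addg a b c | _ => False end)
  /\ fo_definable L 2 (fun s => match s with [:: a; b] => vle a b | _ => False end).

Definition Zp_type (K : fieldType) (v : K -> int) := {x : K | isZp v x}.


Definition int_val_le (p : nat) (a b : int) : Prop :=
  b = 0 \/ (a != 0 /\ (logn p (absz a) <= logn p (absz b))%N).

(* chi a = xi (Exp (p a)) is an injective homomorphism from Z_p to E(Q_p): Exp is
   a homomorphism and an isometry on pZ_p, and 1 is the only unit in the kernel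
   beta^Z of xi.  Hence a + b = c iff chi c is the chord-tangent sum of chi a and
   chi b, a field-definable condition on points.
   For the valuation, an affine coordinate w of xi near O = xi 1 is a power
   series in x - 1 without constant term; if c_k (x - 1)^k is its leading term,
   then v (w (chi a)) = v c_k + k (1 + v a) for all a in p^S Z_p.  So on p^S Z_p,
   v a <= v b iff w (chi b) / w (chi a) lies in Z_p, and Z_p is field-definable
   as { lam | 1 + p lam^2 is a square } by Hensel's lemma (p odd).  Finally,
   multiplication by p^S is definable from addition and does not change the
   comparison of valuations. *)

From Pilot Require Import Defs.
From HB Require Import structures.
From mathcomp Require Import all_boot all_order all_algebra.
From mathcomp Require Import zify ring.
From Stdlib Require Import Classical Setoid.
Import Order.TTheory GRing.Theory Num.Theory.
Set Implicit Arguments. Unset Strict Implicit. Unset Printing Implicit Defensive.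
Local Open Scope ring_scope.

Lemma fo_definable_ext (T : Type) (L : (seq T -> Prop) -> Prop) m (X X' : seq T -> Prop) :
  (forall s, size s = m -> (X s <-> X' s)) -> fo_definable L m X -> fo_definable L m X'.
Proof.
move=> hX [f [hf [e0 he]]]; exists f; split => //; exists e0 => s hs.
by rewrite -hX // he.
Qed.

(** * Definability in induced structures *)

Section InducedStructure.
Variables (K : fieldType) (T : Type) (g : T -> (K * K * K)%type).

Definition induced_rel (n : nat) (Y : seq (K * K * K) -> Prop) : seq T -> Prop :=
  fun s => size s = n /\ Y (map g s).

Lemma induced_lang_rel n Y : P2_definable n Y -> induced_lang g (induced_rel n Y).
Proof. by exists n, Y; split. Qed.

Variables (iota : T -> K) (Yadd : seq (K * K * K) -> Prop).
Hypothesis Yadd_def : P2_definable 3 Yadd.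
Hypothesis Yadd_graph : forall a b c, Yadd [:: g a; g b; g c] <-> iota a + iota b = iota c.

Let Radd := induced_rel 3 Yadd.

Lemma Radd_graph a b c : Radd [:: a; b; c] <-> iota a + iota b = iota c.
Proof. by rewrite /Radd /induced_rel /= -Yadd_graph; split => [[]|]. Qed.

(* [natmul_fo base n i j] says [iota j = n * iota i], using the bound variables
   [base, ..., base + n - 1] for the partial sums. *)
Fixpoint natmul_fo (base n i j : nat) : fo T :=
  if n is n'.+1 then
    FoEx (base + n') (FoAnd (natmul_fo base n' i (base + n')) (FoRel Radd [:: base + n'; i; j]))
  else FoRel Radd [:: j; j; j].

Lemma natmul_fo_in base n i j : fo_in (induced_lang g) (natmul_fo base n i j).
Proof.
elim: n j => [|n IH] j /=; first exact: induced_lang_rel.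
by split; [exact: IH | exact: induced_lang_rel].
Qed.

Hypothesis natmul_closed : forall a (n : nat), exists b, iota b = n%:R * iota a.

Lemma natmul_fo_sat base n i j (e : nat -> T) : (i < base)%N ->
  ~~ ((base <= j) && (j < base + n))%N ->
  (fo_sat e (natmul_fo base n i j) <-> iota (e j) = n%:R * iota (e i)).
Proof.
elim: n j e => [|n IH] j e hi hj.
  rewrite /= Radd_graph mul0r; split => [h|->]; last by rewrite addr0.
  by rewrite -(addrK (iota (e j)) (iota (e j))) h subrr.
set k := (base + n)%N.
have ik : (i == k) = false by apply/negbTE; rewrite neq_ltn (leq_trans hi) ?leq_addr.
have jk : (j == k) = false by apply/negbTE; apply: contra hj => /eqP ->; lia.
have hk : ~~ ((base <= k) && (k < base + n))%N by rewrite ltnn andbF.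
have step x : fo_sat (fun l => if l == k then x else e l)
    (FoAnd (natmul_fo base n i k) (FoRel Radd [:: k; i; j])) <->
    iota x = n%:R * iota (e i) /\ iota x + iota (e i) = iota (e j).
  by rewrite /= -/Radd Radd_graph (IH k _ hi hk) /= eqxx ik jk.
rewrite mulrSr mulrDl mul1r; split => [[x /step [-> <-]] //|h].
have [x hx] := natmul_closed (e i) n.
by exists x; apply/step; rewrite hx h.
Qed.

Variables (t0 : T) (Yv : seq (K * K * K) -> Prop) (N : nat) (vle : T -> T -> Prop).
Hypothesis Yv_def : P2_definable 2 Yv.
(* [Yv] only has to capture [vle] on [N]-multiples, since multiplication by [N]
   is definable from addition. *)
Hypothesis Yv_scaled : forall a b c d, iota c = N%:R * iota a -> iota d = N%:R * iota b ->
  (Yv [:: g c; g d] <-> vle a b).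

Lemma expands_add_val_induced :
  expands_add_val (induced_lang g) (fun a b c => iota a + iota b = iota c) vle.
Proof.
split.
  exists (FoRel Radd [:: 0; 1; 2]%N); split; first exact: induced_lang_rel.
  exists (fun _ => t0) => -[|a [|b [|c [|? ?]]]] //= _.
  by rewrite Radd_graph.
exists (FoEx 2 (FoEx 3 (FoAnd (natmul_fo 4 N 0 2)
  (FoAnd (natmul_fo 4 N 1 3) (FoRel (induced_rel 2 Yv) [:: 2; 3]%N))))).
split; first by split; [exact: natmul_fo_in | split; [exact: natmul_fo_in | exact: induced_lang_rel]].
exists (fun _ => t0) => -[|a [|b [|? ?]]] //= _.
split => [hab|[c [d]]].
  have [c hc] := natmul_closed a N; have [d hd] := natmul_closed b N.
  exists c, d; split; first exact/(natmul_fo_sat (base := 4) (i := 0) (j := 2)).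
  split; first exact/(natmul_fo_sat (base := 4) (i := 1) (j := 3)).
  by split => //=; apply/(Yv_scaled hc hd).
move=> [/(natmul_fo_sat (base := 4) (i := 0) (j := 2)) hc
        [/(natmul_fo_sat (base := 4) (i := 1) (j := 3)) hd [_ /= hY]]].
exact/(Yv_scaled (hc isT isT) (hd isT isT)).
Qed.

End InducedStructure.

Lemma logn_fact_div p n : prime p -> logn p n`! = (n %/ p + logn p (n %/ p)`!)%N.
Proof.
move=> pr; have p0 : (0 < p)%N by exact: prime_gt0.
elim: n => [|n IH]; first by rewrite div0n fact0 logn1.
rewrite factS lognM ?fact_gt0 // IH divnS //.
have [hd|hd] /= := boolP (p %| n.+1)%N; last by rewrite logn_coprime ?prime_coprime.
have -> : logn p n.+1 = (logn p (n %/ p).+1).+1.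
  by rewrite -{1}(divnK hd) lognM ?(logn_prime p pr) ?eqxx ?addn1 ?(divnS n p0) ?hd.
rewrite add1n factS lognM ?fact_gt0 //; lia.
Qed.

Lemma logn_fact_le p n : prime p -> odd p -> (2 * logn p n`! <= n.-1)%N.
Proof.
move=> pr od; have p3 : (3 <= p)%N.
  have := prime_gt1 pr; case: p pr od => [|[|[|p]]] //.
elim: n {-2}n (leqnn n) => [|m IH] n hn.
  by move: hn; rewrite leqn0 => /eqP ->; rewrite fact0 logn1.
rewrite logn_fact_div //; set q := (n %/ p)%N.
have hq : (q * p <= n)%N by rewrite leq_divM.
have [->|q0] := posnP q; first by rewrite fact0 logn1.
have h3 : (q * 3 <= q * p)%N by rewrite leq_mul2l p3 orbT.
have := IH q ltac:(clearbody q; lia); clearbody q; lia.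
Qed.

(** * The group law and the charts at [O] as field formulas *)

Section WeierstrassFormulas.
Variables (K : fieldType) (W : weier K).

Definition fo_ite (c f g : GRing.formula K) : GRing.formula K := ((c /\ f) \/ (~ c /\ g))%T.

Lemma qf_eval_ite e c f g :
  GRing.qf_eval e (fo_ite c f g) =
    if GRing.qf_eval e c then GRing.qf_eval e f else GRing.qf_eval e g.
Proof. by rewrite /=; case: GRing.qf_eval; rewrite ?orbF. Qed.

Definition fo_pt (o : nat) (a b c : GRing.term K) : GRing.formula K :=
  (('X_o == a /\ 'X_o.+1 == b) /\ 'X_o.+2 == c)%T.

(* The chord-tangent law [eadd] as a quantifier-free formula in the variables
   [0..8], the sum of the points [0..2] and [3..5] being [6..8].  Constants are
   bound in [K] first so that [qf_eval] returns literally the terms of [eadd]. *)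
Definition eadd_fo : GRing.formula K :=
  let: Weier a1 a2 a3 a4 a6 := W in
  let zero : K := 0 in let one : K := 1 in let two : K := 2 in let three : K := 3 in
  (let X i : GRing.term K := 'X_i in
  let x1 := X 0%N in let y1 := X 1%N in let z1 := X 2%N in
  let x2 := X 3%N in let y2 := X 4%N in let z2 := X 5%N in
  let sum lam nu :=
    let x3 := lam ^+ 2 + a1%:T * lam - a2%:T - x1 - x2 in
    fo_pt 6 x3 (- (lam + a1%:T) * x3 - nu - a3%:T) one%:T in
  let den := two%:T * y1 + a1%:T * x1 + a3%:T in
  fo_ite (z1 == zero%:T) (fo_pt 6 x2 y2 z2)
  (fo_ite (z2 == zero%:T) (fo_pt 6 x1 y1 z1)
  (fo_ite (x1 == x2 /\ y1 + y2 + a1%:T * x2 + a3%:T == zero%:T) (fo_pt 6 zero%:T one%:T zero%:T)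
  (fo_ite (x1 == x2)
     (sum ((three%:T * x1 ^+ 2 + two%:T * a2%:T * x1 + a4%:T - a1%:T * y1) / den)
          ((- x1 ^+ 3 + a4%:T * x1 + two%:T * a6%:T - a3%:T * y1) / den))
     (sum ((y2 - y1) / (x2 - x1)) ((y1 * x2 - y2 * x1) / (x2 - x1)))))))%T.

Lemma qf_form_eadd_fo : GRing.qf_form eadd_fo.
Proof. by rewrite /eadd_fo; case: W. Qed.

Lemma qf_eval_eadd_fo x1 y1 z1 x2 y2 z2 x3 y3 z3 :
  GRing.qf_eval [:: x1; y1; z1; x2; y2; z2; x3; y3; z3] eadd_fo =
  ((x3, y3, z3) == eadd W (x1, y1, z1) (x2, y2, z2)).
Proof.
rewrite /eadd_fo; case: W => a1 a2 a3 a4 a6; rewrite !qf_eval_ite /=.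
case: (z1 =P 0) => // _; case: (z2 =P 0) => // _.
by case: ifP => // _; case: (x1 =P x2).
Qed.

Definition normalized_fo (o : nat) : GRing.formula K :=
  let zero : K := 0 in let one : K := 1 in
  ('X_o.+2 == one%:T \/ ('X_o.+2 == zero%:T /\ 'X_o.+1 == one%:T) \/
   ('X_o.+2 == zero%:T /\ 'X_o.+1 == zero%:T /\ 'X_o == one%:T))%T.

Lemma qf_eval_normalized_fo s o :
  GRing.qf_eval s (normalized_fo o) = normalized (s`_o, s`_o.+1, s`_o.+2).
Proof. by []. Qed.

Definition add_graph (ts : seq (K * K * K)) : Prop :=
  if ts is [:: P; Q; R] then R = eadd W P Q else False.

Lemma P2_definable_add_graph : P2_definable 3 add_graph.
Proof.
exists (normalized_fo 0 /\ normalized_fo 3 /\ normalized_fo 6 /\ eadd_fo)%T.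
move=> -[|x1 [|y1 [|z1 [|x2 [|y2 [|z2 [|x3 [|y3 [|z3 [|? ?]]]]]]]]]] // _.
rewrite (rwP (GRing.qf_evalP _ _)) /= ?qf_form_eadd_fo // qf_eval_eadd_fo.
split=> [[ts [hs hn e hY]]|/and4P [n1 n2 n3 /eqP hR]].
  case: ts hs hn e hY => [|[[a b] c] [|[[d e] f] [|[[g h] i] [|? ?]]]] // _ hn.
  move=> [-> -> -> -> -> -> -> -> ->] ->.
  by move: hn; rewrite /= andbT => /and3P [-> -> ->]; rewrite eqxx.
by exists [:: (x1, y1, z1); (x2, y2, z2); (x3, y3, z3)]; split; rewrite //= n1 n2 n3.
Qed.

Lemma holds_normalized_fo s o :
  GRing.holds s (normalized_fo o) <-> normalized (s`_o, s`_o.+1, s`_o.+2).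
Proof. by rewrite -qf_eval_normalized_fo; apply: rwP; apply: GRing.qf_evalP. Qed.

Definition chart_coord (b : bool) (P : K * K * K) : K := (if b then P.1.1 else P.2) / P.1.2.

Lemma chart_coord_O b : chart_coord b (Ozero K) = 0.
Proof. by case: b; rewrite /chart_coord /= mul0r. Qed.

(* [Q / P] lies in [Z_p] in the coordinate [chart_coord b], with [Z_p] carved
   out by the condition that [1 + p lam^2] is a square. *)
Definition chart_ratio_rel (p : nat) (b : bool) (ts : seq (K * K * K)) : Prop :=
  if ts is [:: P; Q] then
    exists lam, (exists mu, mu ^+ 2 = 1 + p%:R * lam ^+ 2) /\
                chart_coord b Q = lam * chart_coord b P
  else False.

Lemma P2_definable_chart_ratio p b : P2_definable 2 (chart_ratio_rel p b).
Proof.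
exists (normalized_fo 0 /\ normalized_fo 3 /\
   'exists 'X_6, ('exists 'X_7, 'X_7 ^+ 2 == (1%R : K)%:T + (p%:R%R : K)%:T * 'X_6 ^+ 2) /\
       'X_(if b then 3%N else 5%N) / 'X_4 == 'X_6 * ('X_(if b then 0%N else 2%N) / 'X_1))%T.
move=> -[|x1 [|y1 [|z1 [|x2 [|y2 [|z2 [|? ?]]]]]]] // _.
split=> [[ts [hs hn e hY]]|[/holds_normalized_fo n1 [/holds_normalized_fo n2 [lam [[mu hmu] hw]]]]].
  case: ts hs hn e hY => [|[[a c] d] [|[[e f] g] [|? ?]]] // _ hn.
  move=> [-> -> -> -> -> ->] [lam [[mu hmu] hw]].
  have /andP [n1 n2] : normalized (a, c, d) && normalized (e, f, g) by move: hn; rewrite /= andbT.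
  split; first exact/holds_normalized_fo.
  split; first exact/holds_normalized_fo.
  exists lam; split; first by exists mu.
  by move: hw; rewrite /chart_coord; case: b.
exists [:: (x1, y1, z1); (x2, y2, z2)]; split => //.
  by move: n1 n2 => /= -> ->.
exists lam; split; first by exists mu.
by move: hw; rewrite /chart_coord; case: b.
Qed.

End WeierstrassFormulas.
(** * Valued fields *)

Section Valuation.
Variables (K : fieldType) (v : K -> int).
Hypothesis valM : forall x y : K, x != 0 -> y != 0 -> v (x * y) = v x + v y.
Hypothesis val_add : forall x y : K, x != 0 -> y != 0 -> x + y != 0 ->
  v x <= v (x + y) \/ v y <= v (x + y).

Local Notation ball := (ball v).

Lemma valr1 : v 1 = 0.
Proof.
have : v 1 = v 1 + v 1 by rewrite -{1}(mulr1 (1 : K)) valM ?oner_neq0.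
lia.
Qed.

Lemma valrN x : v (- x) = v x.
Proof.
have [->|x0] := eqVneq x 0; first by rewrite oppr0.
have N10 : (-1 : K) != 0 by rewrite oppr_eq0 oner_eq0.
have vN1 : v (-1) = 0.
  have : v (-1) + v (-1) = 0 by rewrite -valM // mulrNN mulr1 valr1.
  lia.
by rewrite -mulN1r valM // vN1 add0r.
Qed.

Lemma valrV x : x != 0 -> v x^-1 = - v x.
Proof. by move=> x0; have := valM x0 (invr_neq0 x0); rewrite mulfV // valr1; lia. Qed.

Lemma valrX x n : x != 0 -> v (x ^+ n) = v x * n%:Z.
Proof.
move=> x0; elim: n => [|n IH]; first by rewrite expr0 valr1 mulr0.
by rewrite exprS valM ?expf_neq0 // IH; lia.
Qed.

Lemma valrXz x (k : int) : x != 0 -> v (x ^ k) = k * v x.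
Proof.
move=> x0; case: k => n; first by rewrite valrX //; lia.
by rewrite NegzE /exprz /= valrV ?expf_neq0 // valrX //; lia.
Qed.

Lemma ball0 N : ball N 0. Proof. by left. Qed.

Lemma ball_val x : ball (v x) x. Proof. by right. Qed.

Lemma ball0_inv_unit x : x != 0 -> v x = 0 -> ball 0 x^-1.
Proof. by move=> x0 vx; right; rewrite valrV // vx. Qed.

Lemma ball_le N M x : N <= M -> ball M x -> ball N x.
Proof. by move=> h [->|hx]; [left | right; lia]. Qed.

Lemma ballD N x y : ball N x -> ball N y -> ball N (x + y).
Proof.
case=> [->|hx]; first by rewrite add0r.
case=> [->|hy]; first by rewrite addr0; right.
have [->|x0] := eqVneq x 0; first by rewrite add0r; right.
have [->|y0] := eqVneq y 0; first by rewrite addr0; right.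
have [->|s0] := eqVneq (x + y) 0; first by left.
by right; case: (val_add x0 y0 s0); lia.
Qed.

Lemma ballN N x : ball N x -> ball N (- x).
Proof. by case=> [->|h]; [rewrite oppr0; left | right; rewrite valrN]. Qed.

Lemma ballB N x y : ball N x -> ball N y -> ball N (x - y).
Proof. by move=> hx /ballN; apply: ballD. Qed.

Lemma ballM N M x y : ball N x -> ball M y -> ball (N + M) (x * y).
Proof.
case=> [->|hx]; first by rewrite mul0r; left.
case=> [->|hy]; first by rewrite mulr0; left.
have [->|x0] := eqVneq x 0; first by rewrite mul0r; left.
have [->|y0] := eqVneq y 0; first by rewrite mulr0; left.
by right; rewrite valM //; lia.
Qed.

Lemma ballX N x n : ball N x -> ball (N * n%:Z) (x ^+ n).
Proof.
move=> h; elim: n => [|n IH]; first by rewrite expr0; right; rewrite valr1; lia.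
by rewrite exprSr; apply: ball_le (ballM IH h); lia.
Qed.

Lemma ball_sum N (I : Type) (r : seq I) (P : pred I) (F : I -> K) :
  (forall i, P i -> ball N (F i)) -> ball N (\sum_(i <- r | P i) F i).
Proof.
move=> h; apply: (big_rec (fun x => ball N x)); first exact: ball0.
by move=> i x Pi hx; apply: ballD => //; apply: h.
Qed.

Lemma ball0_natr n : ball 0 (n%:R : K).
Proof.
elim: n => [|n IH]; first by left.
by rewrite -addn1 natrD; apply: ballD => //; right; rewrite valr1.
Qed.

Lemma ball0_intr z : ball 0 (z%:~R : K).
Proof. by case: z => n; [exact: ball0_natr | apply: ballN; exact: ball0_natr]. Qed.

Lemma ball_all_eq0 x : (forall N, ball N x) -> x = 0.
Proof. by move=> h; case: (h (v x + 1)) => // hx; lia. Qed.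

Lemma ball_val_eq x y : x != 0 -> ball (v x + 1) (y - x) -> y != 0 /\ v y = v x.
Proof.
move=> x0 h; have [/eqP|d0] := eqVneq (y - x) 0; first by rewrite subr_eq0 => /eqP ->.
have hd : v x + 1 <= v (y - x) by case: h => // /eqP; rewrite (negPf d0).
have y0 : y != 0 by apply: contraTneq hd => ->; rewrite sub0r valrN; lia.
split => //.
have := val_add x0 d0; rewrite subrKC => /(_ y0).
have := @val_add y (- (y - x)) y0; rewrite oppr_eq0 valrN opprB subrKC.
by move=> /(_ d0 x0); lia.
Qed.

Lemma ball1_unit y : ball 1 (y - 1) -> y != 0 /\ v y = 0.
Proof. by have := ball_val_eq (oner_neq0 K) (y := y); rewrite valr1 add0r. Qed.

Lemma ball_subtrans N x y z : ball N (x - y) -> ball N (y - z) -> ball N (x - z).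
Proof. by move=> h1 h2; have := ballD h1 h2; rewrite addrA subrK. Qed.

Lemma ball_subC N x y : ball N (x - y) -> ball N (y - x).
Proof. by move/ballN; rewrite opprB. Qed.

Lemma lim_unique u a b : is_lim v u a -> is_lim v u b -> a = b.
Proof.
move=> ha hb; apply/eqP; rewrite -subr_eq0; apply/eqP; apply: ball_all_eq0 => N.
have [m1 h1] := ha N; have [m2 h2] := hb N.
have := ballB (h2 (maxn m1 m2) (leq_maxr _ _)) (h1 (maxn m1 m2) (leq_maxl _ _)).
by congr ball; ring.
Qed.

Lemma lim_ball u l N : is_lim v u l ->
  (exists m, forall n, (m <= n)%N -> ball N (u n)) -> ball N l.
Proof.
move=> hl [m hm]; have [m1 h1] := hl N.
have := ballB (hm (maxn m m1) (leq_maxl _ _)) (h1 (maxn m m1) (leq_maxr _ _)).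
by congr ball; ring.
Qed.

Lemma lim_near u w a : is_lim v u a ->
  (forall N, exists m, forall n, (m <= n)%N -> ball N (u n - w n)) -> is_lim v w a.
Proof.
move=> hu hd N; have [m1 h1] := hu N; have [m2 h2] := hd N.
exists (maxn m1 m2) => n; rewrite geq_max => /andP [n1 n2].
by have := ballB (h1 n n1) (h2 n n2); congr ball; ring.
Qed.

Lemma lim_cst c : is_lim v (fun _ => c) c.
Proof. by move=> N; exists 0%N => n _; rewrite subrr; left. Qed.

Lemma limB u w a b : is_lim v u a -> is_lim v w b ->
  is_lim v (fun n => u n - w n) (a - b).
Proof.
move=> hu hw N; have [m1 h1] := hu N; have [m2 h2] := hw N.
exists (maxn m1 m2) => n; rewrite geq_max => /andP [n1 n2].
by have := ballB (h1 n n1) (h2 n n2); congr ball; ring.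
Qed.

Lemma lim_step u l N : is_lim v u l ->
  exists m, forall n, (m <= n)%N -> ball N (u n.+1 - u n).
Proof.
move=> h; have [m hm] := h N; exists m => n hn.
by have := ballB (hm n.+1 (leqW hn)) (hm n hn); congr ball; ring.
Qed.

Lemma series_terms_bounded (c : nat -> K) r l :
  is_lim v (fun M => \sum_(n < M) c n * r ^+ n) l ->
  exists2 C : int, C <= 0 & forall n, ball C (c n * r ^+ n).
Proof.
move=> hl; have [m hm] := lim_step 0 hl.
have init m' : exists2 C : int, C <= 0 & forall n, (n < m')%N -> ball C (c n * r ^+ n).
  elim: m' => [|m' [C C0 hC]]; first by exists 0.
  exists (Num.min C (v (c m' * r ^+ m'))) => [|n]; first by rewrite ge_min C0.
  rewrite ltnS leq_eqVlt => /orP [/eqP ->|/hC]; last by apply: ball_le; rewrite ge_min lexx.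
  by apply: ball_le (ball_val _); rewrite ge_min lexx orbT.
have [C C0 hC] := init m; exists C => // n.
have [/hC //|hn] := ltnP n m.
by apply: ball_le C0 _; have := hm n hn; rewrite big_ord_recr /= addrAC subrr add0r.
Qed.

Lemma series_val_lead (c : nat -> K) (r lr : K) (k : nat) :
  r != 0 -> is_lim v (fun M => \sum_(n < M) c n * r ^+ n) lr ->
  c k != 0 -> (forall n, (n < k)%N -> c n = 0) ->
  exists D : int, forall h L, h != 0 -> D <= v h ->
    is_lim v (fun M => \sum_(n < M) c n * h ^+ n) L ->
    L != 0 /\ v L = v (c k) + k%:Z * v h.
Proof.
move=> r0 hr ck0 hck; have [C C0 hC] := series_terms_bounded hr.
pose E := v (c k) + k%:Z * v r + 1 - C.
exists (v r + (absz E)%:Z) => h L h0 hD hL.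
have hE : v (c k) + k%:Z * v r + 1 - C <= v h - v r by rewrite -/E; lia.
set T := v (c k) + k%:Z * v h.
have hterm n : (k < n)%N -> ball (T + 1) (c n * h ^+ n).
  move=> hn; have hq : ball (v h - v r) (h / r) by right; rewrite valM ?invr_eq0 // valrV.
  have -> : c n * h ^+ n = (c n * r ^+ n) * (h / r) ^+ n.
    by rewrite exprMn exprVn; field; rewrite expf_neq0.
  apply: ball_le (ballM (hC n) (ballX n hq)); rewrite /T.
  have : (v h - v r) * (k.+1)%:Z <= (v h - v r) * n%:Z by apply: ler_wpM2l; lia.
  nia.
have hpart j : ball (T + 1) (\sum_(n < k.+1 + j) c n * h ^+ n - c k * h ^+ k).
  elim: j => [|j IH].
    rewrite addn0 big_ord_recr /= big1 ?add0r ?subrr; first by left.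
    by move=> i _; rewrite hck // mul0r.
  rewrite addnS big_ord_recr /= [X in ball _ X]addrAC.
  by apply: ballD => //; apply: hterm; rewrite ltnS leq_addr.
have hL2 : ball (T + 1) (L - c k * h ^+ k).
  apply: (lim_ball (limB hL (lim_cst (c k * h ^+ k)))); exists k.+1 => n hn.
  by have := hpart (n - k.+1)%N; rewrite subnKC.
have ch0 : c k * h ^+ k != 0 by rewrite mulf_neq0 // expf_neq0.
have vch : v (c k * h ^+ k) = T by rewrite valM ?expf_neq0 // valrX // /T; lia.
by have := ball_val_eq ch0 (y := L); rewrite vch => /(_ hL2).
Qed.

Lemma val_le_scale c x y : c != 0 -> (val_le v (c * x) (c * y) <-> val_le v x y).
Proof.
move=> c0; rewrite /val_le.
have [->|y0] := eqVneq y 0; first by rewrite mulr0; split=> _; left.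
have cy0 : c * y != 0 by rewrite mulf_neq0.
have cx0 : (c * x != 0) = (x != 0) by rewrite mulf_eq0 (negPf c0).
split=> -[/eqP|[hx h]]; rewrite ?(negPf cy0) ?(negPf y0) //; right.
  by move: hx h; rewrite cx0 => hx; rewrite !valM //; split => //; lia.
by rewrite cx0; split => //; rewrite !valM // ?cx0 //; lia.
Qed.

Lemma val_le_ratio (f : K -> K) (S C : int) (k : nat) : (0 < k)%N -> f 0 = 0 ->
  (forall a, ball S a -> a != 0 -> f a != 0 /\ v (f a) = C + k%:Z * v a) ->
  forall a b, ball S a -> ball S b ->
  (exists lam, ball 0 lam /\ f b = lam * f a) <-> val_le v a b.
Proof.
move=> k0 f0 hf a b ha hb; rewrite /val_le.
have [->|b0] := eqVneq b 0.
  by split=> _; [left | exists 0; split; [exact: ball0 | rewrite f0 mul0r]].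
have [fb0 vfb] := hf b hb b0.
have [->|a0] := eqVneq a 0.
  rewrite f0; split => [[lam [_ h]]|].
    by move: fb0; rewrite h mulr0 eqxx.
  by case=> [/eqP|[]]; rewrite ?eqxx // (negPf b0).
have [fa0 vfa] := hf a ha a0.
have kpos : 0 < k%:Z by rewrite ltz_nat.
split => [[lam [hl hfb]]|[/eqP|[_ hab]]].
- have l0 : lam != 0 by apply: contraNneq fb0 => l0; rewrite hfb l0 mul0r.
  have vl : 0 <= v lam by case: hl => // /eqP; rewrite (negPf l0).
  have : v (f b) = v lam + v (f a) by rewrite hfb valM.
  by rewrite vfa vfb; right; split => //; nia.
- by rewrite (negPf b0).
- exists (f b / f a); split; last by rewrite divfK.
  by right; rewrite valM ?invr_eq0 // valrV // vfa vfb; nia.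
Qed.

(** * The p-adic field: integers and the exponential *)

Section PadicField.
Variable p : nat.
Hypothesis p_neq0 : (p%:R : K) != 0.
Hypothesis valp : v p%:R = 1.
Hypothesis p_prime : prime p.

Lemma natr_coprime_ball1 m : coprime p m -> ~ ball 1 (m%:R : K).
Proof.
move=> /eqP cpm hm; have [a _] := Bezoutl m (prime_gt0 p_prime); rewrite cpm => ha.
have : ball 1 (((1 + a * m) %/ p)%:R * p%:R - a%:R * m%:R : K).
  apply: ballB; last by have := ballM (ball0_natr a) hm.
  by have := ballM (ball0_natr ((1 + a * m) %/ p)) (ball_val (p%:R : K)); rewrite valp.
rewrite -!natrM divnK // natrD addrK.
by case=> [/eqP|]; [rewrite oner_eq0 | rewrite valr1].
Qed.

Lemma valr_natr n : (0 < n)%N -> (n%:R : K) != 0 /\ v n%:R = (logn p n)%:Z.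
Proof.
move=> n0; have [m cpm e] := pfactor_coprime p_prime n0.
have hm := natr_coprime_ball1 cpm.
have m0 : (m%:R : K) != 0 by apply: contra_not_neq hm => ->; left.
have vm : v m%:R = 0.
  have [/eqP|h] := ball0_natr m; first by rewrite (negPf m0).
  suff : ~ (1 <= v m%:R) by lia.
  by move=> h1; apply: hm; right.
have pe0 : (p%:R : K) ^+ logn p n != 0 by rewrite expf_neq0.
have -> : (n%:R : K) = m%:R * p%:R ^+ logn p n by rewrite {1}e natrM natrX.
rewrite mulf_neq0 // valM // vm valrX // valp; split => //; lia.
Qed.

Lemma valr_intr z : z != 0 -> (z%:~R : K) != 0 /\ v z%:~R = (logn p `|z|)%:Z.
Proof.
case: z => n hz; first by apply: valr_natr; case: n hz.
rewrite NegzE mulrNz oppr_eq0 valrN //; exact: valr_natr.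
Qed.

Lemma padic_intr_inj a b : (a%:~R : K) = b%:~R -> a = b.
Proof.
move=> h; apply/eqP; rewrite -subr_eq0; apply/negP => /negP hab.
by have [] := valr_intr hab; rewrite intrB h subrr eqxx.
Qed.

Lemma int_val_le_intr a b : int_val_le p a b <-> val_le v (a%:~R : K) b%:~R.
Proof.
rewrite /int_val_le /val_le.
have [->|b0] := eqVneq b 0; first by split=> _; left.
have [bK vb] := valr_intr b0.
have [->|a0] := eqVneq a 0.
  by split=> -[/eqP|[]]; rewrite ?eqxx ?mulr0z ?(negPf b0) ?(negPf bK).
have [aK va] := valr_intr a0.
split=> -[/eqP|[_ h]]; rewrite ?(negPf b0) ?(negPf bK) //; right; split=> //.
  by rewrite va vb lez_nat.
by move: h; rewrite va vb lez_nat.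
Qed.

Lemma valr_fact n : (n`!%:R : K) != 0 /\ v n`!%:R = (logn p n`!)%:Z.
Proof. exact: valr_natr (fact_gt0 n). Qed.

Hypothesis p_odd : odd p.

Definition exp_term (x : K) n := x ^+ n / n`!%:R.
Definition exp_sum x N := \sum_(n < N) exp_term x n.

Lemma exp_sumS x N : exp_sum x N.+1 = exp_sum x N + exp_term x N.
Proof. by rewrite /exp_sum big_ord_recr. Qed.

Lemma exp_sum2 x : exp_sum x 2 = 1 + x.
Proof. by rewrite /exp_sum !big_ord_recr big_ord0 /exp_term /= add0r expr0 expr1 !divr1. Qed.

Lemma ball_inv_fact n : ball (- (logn p n`!)%:Z) (n`!%:R : K)^-1.
Proof. by have [f0 vf] := valr_fact n; right; rewrite valrV // vf. Qed.

Lemma ball_exp_term x n : ball 1 x -> ball (n%:Z - (logn p n`!)%:Z) (exp_term x n).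
Proof. by move=> hx; have := ballM (ballX n hx) (ball_inv_fact n); rewrite mul1r. Qed.

Lemma ball0_exp_sum x N : ball 1 x -> ball 0 (exp_sum x N).
Proof.
move=> hx; apply: ball_sum _ => n _; apply: ball_le (ball_exp_term n hx).
by have := logn_fact_le n p_prime p_odd; lia.
Qed.

Lemma ball0_Exp x e : ball 1 x -> Exp_is v x e -> ball 0 e.
Proof. by move=> hx he; apply: (lim_ball he); exists 0%N => n _; apply: ball0_exp_sum. Qed.

Lemma Exp0 : Exp_is v 0 1.
Proof.
apply: lim_near (lim_cst 1) _ => N; exists 1%N => -[//|n] _.
rewrite -/(exp_sum 0 n.+1); elim: n => [|n IH].
  by rewrite exp_sumS /exp_sum big_ord0 add0r /exp_term expr0 divr1 subrr; left.
by rewrite exp_sumS /exp_term expr0n mul0r addr0.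
Qed.

Lemma exp_term_sub x y n : ball 1 x -> ball 1 y -> (2 <= n)%N ->
  ball (v (x - y) + 1) (exp_term x n - exp_term y n).
Proof.
move=> hx hy n2; rewrite /exp_term -mulrBl subrXX -mulrA.
have hs : ball (n.-1)%:Z (\sum_(i < n) x ^+ (n.-1 - i) * y ^+ i).
  apply: ball_sum _ => i _.
  apply: ball_le (ballM (ballX (n.-1 - i) hx) (ballX i hy)).
  by have := ltn_ord i; lia.
apply: ball_le (ballM (ball_val (x - y)) (ballM hs (ball_inv_fact n))).
by have := logn_fact_le n p_prime p_odd; lia.
Qed.

(* Exp is an isometry of [pZ_p]. *)
Lemma Exp_sub x y ex ey : ball 1 x -> ball 1 y -> x != y ->
  Exp_is v x ex -> Exp_is v y ey -> ball (v (x - y) + 1) (ex - ey - (x - y)).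
Proof.
move=> hx hy xy hex hey.
apply: (lim_ball (limB (limB hex hey) (lim_cst (x - y)))).
exists 2%N; elim=> [//|n IH]; rewrite leq_eqVlt => /orP [/eqP <-|hn].
  rewrite -!/(exp_sum _ _) !exp_sum2 (_ : 1 + x - (1 + y) - (x - y) = 0); [by left | ring].
rewrite -!/(exp_sum _ _) !exp_sumS.
have -> : exp_sum x n + exp_term x n - (exp_sum y n + exp_term y n) - (x - y) =
  (exp_sum x n - exp_sum y n - (x - y)) + (exp_term x n - exp_term y n) by ring.
by apply: ballD; [apply: IH | apply: exp_term_sub].
Qed.

Lemma Exp_ball1 x e : ball 1 x -> Exp_is v x e -> ball 1 (e - 1).
Proof.
move=> hx he; have [x0|x0] := eqVneq x 0.
  by move: he; rewrite x0 => /(lim_unique Exp0) ->; rewrite subrr; left.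
have := Exp_sub hx (ball0 1) x0 he Exp0; rewrite !subr0 => /(ball_val_eq x0) [_ ve].
by right; rewrite ve; case: hx => [x00|//]; rewrite x00 eqxx in x0.
Qed.

Lemma Exp_unit x e : ball 1 x -> Exp_is v x e -> e != 0 /\ v e = 0.
Proof. by move=> hx /(Exp_ball1 hx) /ball1_unit. Qed.

Lemma Exp_val_sub1 x e : ball 1 x -> x != 0 -> Exp_is v x e -> e - 1 != 0 /\ v (e - 1) = v x.
Proof. by move=> hx x0 he; have := Exp_sub hx (ball0 1) x0 he Exp0; rewrite !subr0; apply: ball_val_eq. Qed.

Lemma exp_termD x y n : exp_term (x + y) n = \sum_(i < n.+1) exp_term x i * exp_term y (n - i).
Proof.
rewrite /exp_term addrC exprDn mulr_suml; apply: eq_bigr => i _.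
have hi : (i <= n)%N by rewrite -ltnS.
have e : (n`!%:R : K) = 'C(n, i)%:R * i`!%:R * (n - i)`!%:R.
  by rewrite -!natrM -mulnA bin_fact.
have c0 : ('C(n, i)%:R : K) != 0 by apply: (valr_natr _).1; rewrite bin_gt0.
rewrite e -mulr_natr; field.
by rewrite (valr_fact i).1 (valr_fact (n - i)).1 c0.
Qed.

Lemma exp_sumD x y N : exp_sum (x + y) N = \sum_(i < N) exp_term x i * exp_sum y (N - i).
Proof.
elim: N => [|N IH]; first by rewrite /exp_sum !big_ord0.
rewrite exp_sumS IH exp_termD !big_ord_recr /= subnn subSnn.
have -> : exp_sum y 1 = exp_term y 0 by rewrite exp_sumS /exp_sum big_ord0 add0r.
have -> : \sum_(i < N) exp_term x i * exp_sum y (N.+1 - i) =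
   \sum_(i < N) exp_term x i * exp_sum y (N - i) + \sum_(i < N) exp_term x i * exp_term y (N - i).
  rewrite -big_split; apply: eq_bigr => i _ /=.
  by rewrite subSn ?exp_sumS ?mulrDr // ltnW.
ring.
Qed.

Lemma exp_sum_tail y m B : (forall n, (m <= n)%N -> ball B (exp_term y n)) ->
  forall d, ball B (exp_sum y (m + d) - exp_sum y m).
Proof.
move=> h; elim=> [|d IH]; first by rewrite addn0 subrr; left.
rewrite addnS exp_sumS addrAC.
by apply: ballD => //; apply: h; rewrite leq_addr.
Qed.

Lemma ball_exp_sumM x y (M N : nat) : ball 1 x -> ball 1 y -> (2 * M <= N)%N ->
  ball M%:Z (exp_sum x N * exp_sum y N - exp_sum (x + y) N).
Proof.
move=> hx hy hN; rewrite exp_sumD /exp_sum mulr_suml -sumrB.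
apply: ball_sum => i _; rewrite -mulrBr -!/(exp_sum _ _).
set Li := (i%:Z - (logn p i`!)%:Z).
have hb : ball (M%:Z - Li) (exp_sum y N - exp_sum y (N - i)).
  have hbnd n : (N - i <= n)%N -> ball (M%:Z - Li) (exp_term y n).
    move=> hn; apply: ball_le (ball_exp_term n hy).
    have := logn_fact_le i p_prime p_odd; have := logn_fact_le n p_prime p_odd.
    by have := ltn_ord i; rewrite /Li; lia.
  by have := exp_sum_tail hbnd i; rewrite subnK // ltnW.
by have := ballM (ball_exp_term i hx) hb; rewrite addrC subrK.
Qed.

Lemma ExpD x y ex ey exy : ball 1 x -> ball 1 y ->
  Exp_is v x ex -> Exp_is v y ey -> Exp_is v (x + y) exy -> exy = ex * ey.
Proof.
move=> hx hy hex hey hexy.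
have hprod : is_lim v (fun N => exp_sum x N * exp_sum y N) (ex * ey).
  move=> M; have [m1 h1] := hex M; have [m2 h2] := hey M.
  exists (maxn m1 m2) => n; rewrite geq_max => /andP [n1 n2].
  have -> : exp_sum x n * exp_sum y n - ex * ey =
    (exp_sum x n - ex) * exp_sum y n + ex * (exp_sum y n - ey) by ring.
  apply: ballD.
    by have := ballM (h1 n n1) (ball0_exp_sum n hy); rewrite addr0.
  by have := ballM (ball0_Exp hx hex) (h2 n n2); rewrite add0r.
apply: (lim_unique hexy); apply: (lim_near hprod) => M.
exists (2 * `|M|)%N => n hn.
by apply: ball_le (ball_exp_sumM hx hy hn); lia.
Qed.

(** * Square roots and the definability of [Z_p] *)

Lemma two_unit : (2%:R : K) != 0 /\ v 2%:R = 0.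
Proof.
have [h0 ->] := valr_natr (isT : (0 < 2)%N); split => //.
rewrite logn_coprime // prime_coprime //; apply/negP => /dvdn_leq.
by have := prime_gt1 p_prime; case: p p_odd => [|[|[|n]]] // _ _ /(_ isT).
Qed.

Hypothesis padic_complete : forall u, cauchy v u -> exists l, is_lim v u l.

Fixpoint newton_sqrt (c : K) n :=
  if n is n'.+1 then (newton_sqrt c n' + c / newton_sqrt c n') / 2%:R else 1.

Lemma newton_sqrt_step c n : ball 1 (newton_sqrt c n - 1) ->
  newton_sqrt c n.+1 - newton_sqrt c n =
    - (newton_sqrt c n ^+ 2 - c) * ((2%:R)^-1 * (newton_sqrt c n)^-1)
  /\ newton_sqrt c n.+1 ^+ 2 - c =
    (newton_sqrt c n ^+ 2 - c) ^+ 2 * ((2%:R)^-1 * (newton_sqrt c n)^-1) ^+ 2.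
Proof.
move=> h1; have [t0 _] := two_unit.
have [y0 _] := ball1_unit h1.
by split; rewrite /=; field; rewrite t0 y0.
Qed.

Lemma newton_sqrt_conv c : ball 1 (c - 1) -> forall n,
  [/\ ball 1 (newton_sqrt c n - 1), ball (n.+1)%:Z (newton_sqrt c n ^+ 2 - c) &
      ball (n.+1)%:Z (newton_sqrt c n.+1 - newton_sqrt c n)].
Proof.
move=> hc; have [t0 vt] := two_unit.
have hinv n : ball 1 (newton_sqrt c n - 1) -> ball 0 ((2%:R)^-1 * (newton_sqrt c n)^-1).
  move=> /ball1_unit [y0 vy].
  by have := ballM (ball0_inv_unit t0 vt) (ball0_inv_unit y0 vy); rewrite addr0.
have hdiff n : ball 1 (newton_sqrt c n - 1) -> ball (n.+1)%:Z (newton_sqrt c n ^+ 2 - c) ->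
    ball (n.+1)%:Z (newton_sqrt c n.+1 - newton_sqrt c n).
  move=> h1 h2; rewrite (newton_sqrt_step h1).1.
  by have := ballM (ballN h2) (hinv n h1); rewrite addr0.
have h0 : ball 1 (newton_sqrt c 0 ^+ 2 - c) by rewrite /= expr1n -opprB; apply: ballN.
elim=> [|n [h1 h2 h3]].
  by split => //; [rewrite subrr; left | apply: hdiff => //; rewrite subrr; left].
have h1' : ball 1 (newton_sqrt c n.+1 - 1).
  by apply: ball_subtrans h1; apply: ball_le h3; lia.
have h2' : ball (n.+2)%:Z (newton_sqrt c n.+1 ^+ 2 - c).
  rewrite (newton_sqrt_step h1).2.
  by apply: ball_le (ballM (ballX 2 h2) (ballX 2 (hinv n h1))); lia.
by split => //; apply: hdiff.
Qed.

Lemma hensel_sqrt c : ball 1 (c - 1) -> exists y, y ^+ 2 = c.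
Proof.
move=> hc; have conv := newton_sqrt_conv hc.
have tail m d : ball (m.+1)%:Z (newton_sqrt c (m + d) - newton_sqrt c m).
  elim: d => [|d IH]; first by rewrite addn0 subrr; left.
  have [_ _ h] := conv (m + d); rewrite addnS; apply: ball_subtrans IH.
  by apply: ball_le h; lia.
have [y hy] : exists y, is_lim v (newton_sqrt c) y.
  apply: padic_complete => N; exists `|N|%N => n k hn hk.
  rewrite -(subnKC hn) -(subnKC hk); apply: (ball_subtrans (y := newton_sqrt c `|N|)).
    by apply: ball_le (tail _ _); lia.
  by apply: ball_subC; apply: ball_le (tail _ _); lia.
have unit n : ball 0 (newton_sqrt c n).
  have [h1 _ _] := conv n; rewrite -(subrK 1 (newton_sqrt c n)).
  by apply: ballD; [apply: ball_le h1 | right; rewrite valr1].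
exists y; apply/eqP; rewrite -subr_eq0; apply/eqP; apply: ball_all_eq0 => N.
have hy0 : ball 0 y by apply: (lim_ball hy); exists 0%N => n _.
have [m hm] := hy N; set n := maxn m `|N|.
have [_ h2 _] := conv n.
have -> : y ^+ 2 - c = - (newton_sqrt c n - y) * (y + newton_sqrt c n) + (newton_sqrt c n ^+ 2 - c)
  by ring.
apply: ballD.
  by have := ballM (ballN (hm n (leq_maxl _ _))) (ballD hy0 (unit n)); rewrite addr0.
by apply: ball_le h2; have := leq_maxr m `|N|; rewrite -/n; lia.
Qed.

Lemma Zp_square_char lam : (exists mu, mu ^+ 2 = 1 + p%:R * lam ^+ 2) <-> ball 0 lam.
Proof.
split=> [[mu hmu]|h]; last first.
  apply: hensel_sqrt; rewrite (addrC 1) addrK.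
  by apply: ball_le (ballM (ball_val (p%:R : K)) (ballX 2 h)); rewrite valp; lia.
have [->|l0] := eqVneq lam 0; first by left.
have [hl|hl] := lerP 0 (v lam); first by right.
(* Otherwise [1 + p lam^2] has the odd valuation [1 + 2 v lam]. *)
have t0 : (p%:R : K) * lam ^+ 2 != 0 by rewrite mulf_neq0 // expf_neq0.
have vt : v (p%:R * lam ^+ 2) = 1 + v lam * 2 by rewrite valM ?expf_neq0 // valrX // valp.
have := ball_val_eq t0 (y := 1 + p%:R * lam ^+ 2); rewrite addrK -hmu.
move=> /(_ (or_intror _)) [|mu0 vmu]; first by rewrite valr1 vt; lia.
have {}mu0 : mu != 0 by apply: contraNneq mu0 => ->; rewrite expr0n.
by move: vmu; rewrite valrX // vt; lia.
Qed.

(** * The Tate parametrization *)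

Section TateCurve.
Variables (beta : K) (W : weier K) (xi chi : K -> (K * K * K)%type).
Hypothesis beta_neq0 : beta != 0.
Hypothesis beta_ball1 : ball 1 beta.
Hypothesis xi_Epoint : forall x : K, x != 0 -> Epoint W (xi x).
Hypothesis xiM : forall x y : K, x != 0 -> y != 0 -> xi (x * y) = eadd W (xi x) (xi y).
Hypothesis xi_ker : forall x : K, x != 0 -> (xi x = Ozero K <-> exists k : int, x = beta ^ k).
Hypothesis xi_analytic : analytic_map v xi.
Hypothesis chi_Exp : forall a : K, isZp v a ->
  exists e : K, Exp_is v (p%:R * a) e /\ chi a = xi e.

Lemma xi1 : xi 1 = Ozero K.
Proof. by apply/(xi_ker (oner_neq0 K)); exists 0; rewrite expr0z. Qed.

(* Since [v beta >= 1], the only unit in the kernel [beta^Z] of [xi] is [1]. *)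
Lemma xi_ker_unit x : x != 0 -> v x = 0 -> xi x = Ozero K -> x = 1.
Proof.
move=> x0 vx /(xi_ker x0) [k xE]; have : v x = k * v beta by rewrite xE valrXz.
have : 1 <= v beta by case: beta_ball1 => // /eqP; rewrite (negPf beta_neq0).
by rewrite vx xE => vb0 /esym/eqP; rewrite mulf_eq0 => /orP [/eqP ->|/eqP]; [rewrite expr0z | lia].
Qed.

Lemma ball1_pZp a : isZp v a -> ball 1 (p%:R * a).
Proof. by move=> ha; have := ballM (ball_val (p%:R : K)) ha; rewrite valp addr0. Qed.

Lemma chiD a b : isZp v a -> isZp v b -> chi (a + b) = eadd W (chi a) (chi b).
Proof.
move=> ha hb; have [ea [hea ->]] := chi_Exp ha; have [eb [heb ->]] := chi_Exp hb.
have [eab [heab ->]] := chi_Exp (ballD ha hb).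
have [ea0 _] := Exp_unit (ball1_pZp ha) hea; have [eb0 _] := Exp_unit (ball1_pZp hb) heb.
rewrite mulrDr in heab.
by rewrite (ExpD (ball1_pZp ha) (ball1_pZp hb) hea heb heab) xiM.
Qed.

Lemma chi0 : chi 0 = Ozero K.
Proof.
have [e [he ->]] := chi_Exp (ball0 0); rewrite mulr0 in he.
by rewrite -(lim_unique Exp0 he) xi1.
Qed.

(* [xi (Exp (p a) / Exp (p b)) = O] forces [Exp (p a) = Exp (p b)], and Exp is
   injective on [pZ_p] because it is an isometry there. *)
Lemma chi_inj a b : isZp v a -> isZp v b -> chi a = chi b -> a = b.
Proof.
move=> ha hb; have [ea [hea ->]] := chi_Exp ha; have [eb [heb ->]] := chi_Exp hb.
have [ea0 vea] := Exp_unit (ball1_pZp ha) hea; have [eb0 veb] := Exp_unit (ball1_pZp hb) heb.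
move=> hx; have eb'0 : eb^-1 != 0 by rewrite invr_eq0.
have : xi (ea / eb) = Ozero K by rewrite xiM // hx -xiM // mulfV // xi1.
move=> /(xi_ker_unit (mulf_neq0 ea0 eb'0)); rewrite valM // valrV // vea veb => /(_ erefl).
move=> /(canRL (divfK eb0)); rewrite mul1r => eab.
apply/eqP; apply/negPn/negP => hab.
have pab : p%:R * a != p%:R * b by apply: contra hab => /eqP/(mulfI p_neq0) ->.
have := Exp_sub (ball1_pZp ha) (ball1_pZp hb) pab hea heb.
rewrite eab subrr sub0r; case=> [/eqP|]; first by rewrite oppr_eq0 subr_eq0 (negPf pab).
by rewrite valrN; lia.
Qed.

(* At [O = xi 1 = (0:1:0)] the analytic chart of [xi] is [y != 0]. *)
Lemma xi_chart_series : exists (N0 : int) (c : bool -> nat -> K),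
  (forall b, c b 0%N = 0) /\
  forall x, x != 0 -> ball N0 (x - 1) -> (xi x).1.2 != 0 /\
    forall b, is_lim v (fun M => \sum_(n < M) c b n * (x - 1) ^+ n) (chart_coord b (xi x)).
Proof.
have [N0 [i [c hc]]] := xi_analytic (oner_neq0 K).
have i1 : val i = 1%N.
  have [+ _] := hc 1 (oner_neq0 K) (or_introl (subrr 1)); rewrite xi1 /Defs.coord /=.
  by case: (val i =P 0%N) => [_|_]; rewrite ?eqxx //; case: (val i =P 1%N) => // _; rewrite eqxx.
have coordE t (j : 'I_3) : Defs.coord t j = if val j == 0%N then t.1.1 else
    if val j == 1%N then t.1.2 else t.2 by case: t => [[]].
pose j b : 'I_3 := if b then Ordinal (isT : (0 < 3)%N) else Ordinal (isT : (2 < 3)%N).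
have ji b : j b != i by apply/eqP => /(congr1 val); rewrite i1; case: b.
have chartE b t : Defs.coord t (j b) / Defs.coord t i = chart_coord b t.
  by rewrite !coordE i1; case: b.
have series x : x != 0 -> ball N0 (x - 1) -> (xi x).1.2 != 0 /\
    forall b, is_lim v (fun M => \sum_(n < M) c (j b) n * (x - 1) ^+ n) (chart_coord b (xi x)).
  move=> x0 hx; have [y0 hl] := hc x x0 hx.
  split=> [|b]; first by move: y0; rewrite coordE i1.
  by rewrite -chartE; apply: hl.
exists N0, (fun b => c (j b)); split=> // b.
have [_ /(_ b)] := series 1 (oner_neq0 K) (or_introl (subrr 1)).
rewrite xi1 chart_coord_O subrr => /(lim_unique _); apply.
apply: lim_near (lim_cst (c (j b) 0%N)) _ => N; exists 1%N => -[//|n] _.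
by rewrite big_ord_recl big1 => [|k _]; rewrite ?expr0n /= ?mulr1 ?addr0 ?subrr ?mulr0 //; left.
Qed.

Section ChartSeries.
Variables (N0 : int) (c : bool -> nat -> K).
Hypothesis c0 : forall b, c b 0%N = 0.
Hypothesis xi_series : forall x, x != 0 -> ball N0 (x - 1) -> (xi x).1.2 != 0 /\
  forall b, is_lim v (fun M => \sum_(n < M) c b n * (x - 1) ^+ n) (chart_coord b (xi x)).

Let r : K := p%:R ^+ (absz N0).+1.

Let r_neq0 : r != 0. Proof. by rewrite expf_neq0. Qed.

Let one_add_rK : 1 + r - 1 = r. Proof. by rewrite (addrC 1) addrK. Qed.

Let r_ball : ball N0 (1 + r - 1).
Proof. by rewrite one_add_rK; right; rewrite valrX // valp; lia. Qed.

Let one_add_r : 1 + r != 0 /\ v (1 + r) = 0.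
Proof. by apply: ball1_unit; rewrite one_add_rK; right; rewrite valrX // valp; lia. Qed.

Let series_at_r b :
  is_lim v (fun M => \sum_(n < M) c b n * r ^+ n) (chart_coord b (xi (1 + r))).
Proof. by have [_] := xi_series one_add_r.1 r_ball; rewrite one_add_rK. Qed.

(* Otherwise both chart coordinates of [xi (1 + r)] vanish, i.e. [xi (1 + r) = O],
   whereas [1 + r] is a unit different from [1]. *)
Lemma chart_series_nontrivial : exists b n, c b n != 0.
Proof.
apply: NNPP => hc.
have coord0 b : chart_coord b (xi (1 + r)) = 0.
  apply: lim_unique (series_at_r b) _; apply: lim_near (lim_cst 0) _ => N.
  exists 0%N => n _; rewrite big1 ?subrr; first by left.
  move=> m _; have -> : c b m = 0 by apply/eqP/negPn/negP => h; apply: hc; exists b, m.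
  by rewrite mul0r.
have [y0 _] := xi_series one_add_r.1 r_ball.
have : xi (1 + r) = Ozero K.
  move: (coord0 true) (coord0 false) y0 (xi_Epoint one_add_r.1); rewrite /chart_coord.
  case: (xi (1 + r)) => [[x y] z] /= hx hz y0.
  have {hx}-> : x = 0 by apply/eqP; move/eqP: hx; rewrite mulf_eq0 invr_eq0 (negPf y0) orbF.
  have {hz}-> : z = 0 by apply/eqP; move/eqP: hz; rewrite mulf_eq0 invr_eq0 (negPf y0) orbF.
  by rewrite /Epoint /normalized eqxx (eq_sym 0 1) oner_eq0 /= andbF orbF => /andP [/eqP ->].
move=> /(xi_ker_unit one_add_r.1 one_add_r.2) /eqP.
by rewrite -subr_eq0 one_add_rK (negPf r_neq0).
Qed.

Lemma chi_chart_val : exists (S : nat) (C : int) (k : nat) (b : bool), (0 < k)%N /\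
  forall a, ball S%:Z a -> a != 0 ->
    chart_coord b (chi a) != 0 /\ v (chart_coord b (chi a)) = C + k%:Z * v a.
Proof.
have [b hb] := chart_series_nontrivial.
have [k ck kmin] := ex_minnP hb.
have ck0 n : (n < k)%N -> c b n = 0.
  by move=> hn; apply/eqP/negPn/negP => /kmin; rewrite leqNgt hn.
have k0 : (0 < k)%N by case: k ck {kmin ck0} => //; rewrite c0 eqxx.
have [D hD] := series_val_lead r_neq0 (series_at_r b) ck ck0.
exists (absz N0 + absz D)%N, (v (c b k) + k%:Z), k, b; split => // a ha a0.
have va : (absz N0 + absz D)%:Z <= v a by case: ha => // /eqP; rewrite (negPf a0).
have hz : isZp v a by right; lia.
have [e [he ->]] := chi_Exp hz.
have [e0 _] := Exp_unit (ball1_pZp hz) he.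
have [e10] := Exp_val_sub1 (ball1_pZp hz) (mulf_neq0 p_neq0 a0) he.
rewrite valM // valp => ve1.
have be : ball N0 (e - 1) by right; rewrite ve1; lia.
have hDe : D <= v (e - 1) by rewrite ve1; lia.
have [_ /(_ b) /(hD (e - 1) _ e10 hDe) [-> ->]] := xi_series e0 be.
by rewrite ve1; split => //; ring.
Qed.

End ChartSeries.

Lemma chi_chart_ratio : exists (S : nat) (b : bool), forall a a', ball S%:Z a -> ball S%:Z a' ->
  (exists lam, ball 0 lam /\ chart_coord b (chi a') = lam * chart_coord b (chi a)) <->
  val_le v a a'.
Proof.
have [N0 [c [c0 hc]]] := xi_chart_series.
have [S [C [k [b [k0 hv]]]]] := chi_chart_val c0 hc.
exists S, b; apply: (val_le_ratio (f := fun a => chart_coord b (chi a))) k0 _ hv.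
by rewrite chi0 chart_coord_O.
Qed.

Lemma add_graph_chi a b c : isZp v a -> isZp v b -> isZp v c ->
  add_graph W [:: chi a; chi b; chi c] <-> a + b = c.
Proof.
move=> ha hb hc; split=> [h|<-]; last by rewrite /= chiD.
by apply: chi_inj => //; [exact: ballD | rewrite chiD].
Qed.

Lemma chart_ratio_chi_scaled : exists (b : bool) (N : nat), (N%:R : K) != 0 /\
  forall x y, isZp v x -> isZp v y ->
    (chart_ratio_rel p b [:: chi (N%:R * x); chi (N%:R * y)] <-> val_le v x y).
Proof.
have [S [b hS]] := chi_chart_ratio.
have N0 : ((p ^ S)%:R : K) != 0 by rewrite natrX expf_neq0.
have small x : isZp v x -> ball S%:Z ((p ^ S)%:R * x).
  by move=> hx; apply: ball_le (ballM (ball_val _) hx); rewrite natrX valrX // valp; lia.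
exists b, (p ^ S)%N; split => // x y hx hy.
rewrite -(val_le_scale _ _ N0) -hS; try exact: small.
by split=> -[lam [hl e]]; exists lam; split => //; apply/Zp_square_char.
Qed.

Lemma Zp_expands :
  expands_add_val (induced_lang (fun a : Zp_type v => chi (sval a)))
    (fun a b c : Zp_type v => sval a + sval b = sval c)
    (fun a b => val_le v (sval a) (sval b)).
Proof.
have [b [N [N0 hN]]] := chart_ratio_chi_scaled.
apply: (expands_add_val_induced (g := fun a : Zp_type v => chi (sval a))
  (iota := fun a => sval a) (Yadd := add_graph W) (Yv := chart_ratio_rel p b) (N := N)
  (vle := fun a b => val_le v (sval a) (sval b)) (P2_definable_add_graph W) _ _ (exist (isZp v) 0 (ball0 0)) (P2_definable_chart_ratio K p b)).

- by move=> [x hx] [y hy] [z hz]; apply: add_graph_chi.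
- move=> [x hx] n; have hnx : isZp v (n%:R * x).
    by apply: ball_le (ballM (ball0_natr n) hx); rewrite addr0.
  by exists (exist _ _ hnx).
- by move=> [x hx] [y hy] [z hz] [t ht] /= -> ->; apply: hN.
Qed.

Lemma Z_expands :
  expands_add_val (induced_lang (fun n : int => chi n%:~R))
    (fun a b c : int => a + b = c) (int_val_le p).
Proof.
have [b [N [N0 hN]]] := chart_ratio_chi_scaled.
have hadd x y z : add_graph W [:: chi x%:~R; chi y%:~R; chi z%:~R] <-> (x%:~R + y%:~R : K) = z%:~R.
  exact: add_graph_chi (ball0_intr x) (ball0_intr y) (ball0_intr z).
have hmul x (n : nat) : exists y : int, (y%:~R : K) = n%:R * x%:~R.
  by exists (x * n%:Z); rewrite intrM mulrC.
have hscaled x y z t : (z%:~R : K) = N%:R * x%:~R -> (t%:~R : K) = N%:R * y%:~R ->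
    chart_ratio_rel p b [:: chi z%:~R; chi t%:~R] <-> int_val_le p x y.
  by move=> -> ->; rewrite int_val_le_intr; apply: hN; apply: ball0_intr.
have [hgraph hval] := expands_add_val_induced (P2_definable_add_graph W) hadd hmul 0
  (P2_definable_chart_ratio K p b) hscaled.
split => //; apply: fo_definable_ext hgraph => -[|x [|y [|z [|? ?]]]] //= _.
by rewrite -intrD; split=> [/padic_intr_inj|->].
Qed.

End TateCurve.
End PadicField.
End Valuation.

Theorem proposition12p1 (K : fieldType) (v : K -> int) (p : nat)
    (beta : K) (W : weier K) (xi : K -> (K * K * K)%type) (chi : K -> (K * K * K)%type) :
  prime p -> odd p -> padic_field v p ->
  beta != 0 -> ball v 1 beta ->
  disc W != 0 ->
  (forall x : K, x != 0 -> Epoint W (xi x)) ->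
  (forall x y : K, x != 0 -> y != 0 -> xi (x * y) = eadd W (xi x) (xi y)) ->
  (forall P, Epoint W P -> exists2 x : K, x != 0 & xi x = P) ->
  (forall x : K, x != 0 -> (xi x = Ozero K <-> exists k : int, x = beta ^ k)) ->
  analytic_map v xi ->
  (forall a : K, isZp v a -> exists e : K, Exp_is v (p%:R * a) e /\ chi a = xi e) ->
  expands_add_val (induced_lang (fun a : Zp_type v => chi (sval a)))
      (fun a b c : Zp_type v => sval a + sval b = sval c)
      (fun a b => val_le v (sval a) (sval b))
  /\ expands_add_val (induced_lang (fun n : int => chi (n%:~R)))
      (fun a b c : int => a + b = c) (int_val_le p).
Proof.
move=> p_prime p_odd [valM val_add [p_neq0 valp] complete _] beta0 beta1 _ xiE xiM _ xi_ker xiA chiE.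
split.
  exact: (Zp_expands valM val_add p_neq0 valp p_prime p_odd complete beta0 beta1 xiE xiM xi_ker xiA chiE).
exact: (Z_expands valM val_add p_neq0 valp p_prime p_odd complete beta0 beta1 xiE xiM xi_ker xiA chiE).
Qed.
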